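(* Consider shadow estimation with uniform sampling from the local Clifford group $\mathrm{Cl}_1^{\times n}$ with noise channels $\Lambda(g_1,\dots,g_n)$ for each $(g_1,\dots,g_n)\in\mathrm{Cl}_1^{\times n}$. Then the noisy frame operator $\tilde S=\mathbb{E}_{g}[\omega(g)^\dagger M\omega(g)\Lambda(g)]$ ($g$ uniform) is $$\tilde S=\sum_{a\in\mathbb{F}_2^{2n}}\frac1{3^{|\mathrm{supp}(a)|}}|\hat\sigma_a)(\hat\sigma_a|\,\bar\Lambda_a,$$ where $\bar\Lambda_a=\mathbb{E}_{g_1\in G(a_1)}\cdots\mathbb{E}_{g_n\in G(a_n)}\Lambda(g_1,\dots,g_n)$. If the noise is local, i.e. $\Lambda(g_1,\dots,g_n)=\bigotimes_{i=1}^n\Lambda^{(i)}(g_i)$, then $\bar\Lambda_a=\bigotimes_{i=1}^n\mathbb{E}_{g_i\in G(a_i)}\Lambda^{(i)}(g_i)$.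
   Context: $d=2^n$; $(A|B)=\mathrm{Tr}(A^\dagger B)$; $|A)(B|$ is $C\mapsto(B|C)A$; $\omega(g)(A)=gAg^\dagger$, $\omega(g)^\dagger(A)=g^\dagger Ag$; for $g=g_1\otimes\cdots\otimes g_n$, $\omega(g)=\bigotimes_i\omega(g_i)$. $M=\sum_{x\in\mathbb{F}_2^n}|E_x)(E_x|$ with $E_x=|x\rangle\langle x|$. Single-qubit Paulis $\sigma_{00}=\mathbb 1,\sigma_{01}=X,\sigma_{11}=Y,\sigma_{10}=Z$; for $a=(a_1,\dots,a_n)$, $a_i\in\mathbb{F}_2^2$, $\sigma_a=\bigotimes_i\sigma_{a_i}$, $\hat\sigma_a=\sigma_a/\sqrt d$, $|\mathrm{supp}(a)|=|\{i:a_i\ne0\}|$. $\mathrm{Cl}_1$ is the single-qubit Clifford group, $\mathrm{St}(Z)=\{h\in\mathrm{Cl}_1:\omega(h)^\dagger|Z)(Z|\omega(h)=|Z)(Z|\}$, and for $a\in\mathbb{F}_2^2\setminus\{0\}$, $g_a\in\mathrm{Cl}_1$ is an element with $\omega(g_a)^\dagger|Z)(Z|\omega(g_a)=|\sigma_a)(\sigma_a|$. $G(a)=\mathrm{Cl}_1$ if $a=0$ and $G(a)=\mathrm{St}(Z)g_a=\{hg_a:h\in\mathrm{St}(Z)\}$ if $a\ne0$. Expectations over $G(a_i)$ are uniform averages. *)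

From HB Require Import structures.
From mathcomp Require Import all_boot all_order all_algebra all_field.
From mathcomp Require Import boolp.
Set Implicit Arguments. Unset Strict Implicit. Unset Printing Implicit Defensive.
Import Order.TTheory GRing.Theory Num.Theory.
Local Open Scope ring_scope.

(* Operators (matrices) indexed by a finite basis I: entries A (row, col). *)
Notation Op I := {ffun (I * I)%type -> algC}.

(* one qubit: basis |0> = false, |1> = true *)
Notation Mat2 := (Op bool).
Notation bits n := {ffun 'I_n -> bool}.
Notation OpN n := (Op (bits n)).

Section Ops.
Variable I : finType.
Definition scop (c : algC) (A : Op I) : Op I := [ffun p => c * A p].
Definition mulop (A B : Op I) : Op I :=
  [ffun p => \sum_(z : I) A (p.1, z) * B (z, p.2)].
Definition adj (A : Op I) : Op I := [ffun p => (A (p.2, p.1))^*].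
Definition idop : Op I := [ffun p => (p.1 == p.2)%:R].
Definition trop (A : Op I) : algC := \sum_(x : I) A (x, x).
Definition hs (A B : Op I) : algC := trop (mulop (adj A) B).
Definition ketbra (A B : Op I) : Op I -> Op I := fun C => scop (hs B C) A.
Definition omega (g : Op I) : Op I -> Op I := fun A => mulop (mulop g A) (adj g).
Definition omegad (g : Op I) : Op I -> Op I := fun A => mulop (mulop (adj g) A) g.
Definition unitary (g : Op I) : Prop := mulop g (adj g) = idop.
Definition phase_eq (A B : Op I) : Prop := exists c : algC, `|c| = 1 /\ A = scop c B.
End Ops.

(* single-qubit Paulis: sigma_00 = 1, sigma_01 = X, sigma_11 = Y, sigma_10 = Z,
   an element of F_2^2 being a pair of booleans *)
Definition Xm : Mat2 := [ffun p => (p.1 != p.2)%:R].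
Definition Ym : Mat2 := [ffun p => if p.1 == p.2 then 0 else if p.1 then 'i else - 'i].
Definition Zm : Mat2 := [ffun p => if p.1 == p.2 then (if p.1 then -1 else 1) else 0].
Definition pauli1 (b : bool * bool) : Mat2 :=
  match b with
  | (false, false) => idop bool
  | (false, true) => Xm
  | (true, true) => Ym
  | (true, false) => Zm
  end.

Definition clifford1 (V : Mat2) : Prop :=
  forall b, exists b' (k : nat), omega V (pauli1 b) = scop ('i ^+ k) (pauli1 b').

Definition tens n (g : 'I_n -> Mat2) : OpN n :=
  [ffun p : bits n * bits n => \prod_(i < n) g i (p.1 i, p.2 i)].

Notation pauliv n := {ffun 'I_n -> (bool * bool)%type}.
Definition sigma n (a : pauliv n) : OpN n := tens (fun i => pauli1 (a i)).
Definition dim n : algC := (2 ^ n)%:R.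
Definition hsigma n (a : pauliv n) : OpN n := scop (sqrtC (dim n))^-1 (sigma a).
Definition supp n (a : pauliv n) : nat := #|[set i | a i != (false, false)]|.

Definition Eop n (x : bits n) : OpN n := [ffun p : bits n * bits n => ((p.1 == x) && (p.2 == x))%:R].
Definition Mop n (C : OpN n) : OpN n := \sum_(x : bits n) ketbra (Eop x) (Eop x) C.

Definition munit (j k : bool) : Mat2 := [ffun p => ((p.1 == j) && (p.2 == k))%:R].

(* tensor product of single-qubit superoperators, defined as the linear
   extension of its action on product matrix units *)
Definition tens_super n (L : 'I_n -> Mat2 -> Mat2) (C : OpN n) : OpN n :=
  [ffun p : bits n * bits n => \sum_(q : bits n * bits n)
                C q * \prod_(i < n) L i (munit (q.1 i) (q.2 i)) (p.1 i, p.2 i)].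

(* The single-qubit Clifford group, modulo global phases, is given by a finite
   type T of representatives U : T -> Mat2 (a transversal of Cl_1 / U(1)). *)
Definition clifford_transversal (T : finType) (U : T -> Mat2) : Prop :=
  [/\ forall t, unitary (U t) /\ clifford1 (U t),
      forall V, unitary V -> clifford1 V -> exists t, phase_eq V (U t)
    & forall t t', phase_eq (U t) (U t') -> t = t'].

Section Groups.
Variables (T : finType) (U : T -> Mat2).
Definition StZ : {set T} :=
  [set h | `[< forall A, omegad (U h) (ketbra Zm Zm (omega (U h) A)) = ketbra Zm Zm A >]].
(* G(a) = Cl_1 if a = 0, St(Z) g_a otherwise (products taken modulo phase,
   i.e. the representative in T of h * g_a) *)
Definition Gset (ga : bool * bool -> T) (a : bool * bool) : {set T} :=
  if a == (false, false) then setT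
  else [set t | `[< exists2 h, h \in StZ & phase_eq (U t) (mulop (U h) (U (ga a))) >]].
Definition avg_super (G : {set T}) (L : T -> Mat2 -> Mat2) : Mat2 -> Mat2 :=
  fun A => scop (#|G|%:R)^-1 (\sum_(t in G) L t A).
End Groups.

From Pilot Require Import Defs.
From HB Require Import structures.
From mathcomp Require Import all_boot all_order all_algebra all_field.
From mathcomp Require Import boolp.
From mathcomp Require Import ring.
Import Order.TTheory GRing.Theory Num.Theory.
Local Open Scope ring_scope.
Set Implicit Arguments. Unset Strict Implicit.

(* If omega(V)^dagger Z = c sigma_b for a single-qubit Clifford V, the projectors
   V^dagger |x><x| V are (1 +- c sigma_b)/2, so omega(V)^dagger M omega(V) equals
   (|1)(1| + |sigma_b)(sigma_b|)/2.  For a product g this tensorizes into the sum of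
   |sigma^_a)(sigma^_a| over the a with g_i in G(a_i) for all i.  The sets G(b), b <> 0,
   partition Cl_1 into three translates of St(Z), so exchanging the average over g with
   the sum over a leaves the weight |G(a_1)|...|G(a_n)| / |Cl_1|^n = 3^-|supp a|.
   For local noise the restricted average of a tensor product of channels factorizes
   qubit by qubit. *)

Section Operators.
Variable I : finType.
Implicit Types (A B C V W : Op I) (c : algC).

Lemma mulopE A B i j : mulop A B (i, j) = \sum_z A (i, z) * B (z, j).
Proof. by rewrite ffunE. Qed.

Lemma adjE A i j : adj A (i, j) = (A (j, i))^*.
Proof. by rewrite ffunE. Qed.

Lemma scopE c A p : scop c A p = c * A p.
Proof. by rewrite ffunE. Qed.

Lemma idopE i j : idop I (i, j) = (i == j)%:R.
Proof. by rewrite ffunE. Qed.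

Lemma opP A B : (forall i j, A (i, j) = B (i, j)) -> A = B.
Proof. by move=> eqAB; apply/ffunP => -[i j]. Qed.

Lemma mulopA A B C : mulop (mulop A B) C = mulop A (mulop B C).
Proof.
apply: opP => i j; rewrite !mulopE.
under eq_bigr do rewrite mulopE mulr_suml.
rewrite exchange_big /=; apply: eq_bigr => w _.
by rewrite mulopE mulr_sumr; apply: eq_bigr => z _; rewrite mulrA.
Qed.

Lemma mulop1 A : mulop A (idop I) = A.
Proof.
apply: opP => i j; rewrite mulopE (bigD1 j) //= idopE eqxx mulr1 big1 ?addr0 //.
by move=> z /negPf nz; rewrite idopE nz mulr0.
Qed.

Lemma mul1op A : mulop (idop I) A = A.
Proof.
apply: opP => i j; rewrite mulopE (bigD1 i) //= idopE eqxx mul1r big1 ?addr0 //.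
by move=> z; rewrite eq_sym => /negPf nz; rewrite idopE nz mul0r.
Qed.

Lemma adjK A : adj (adj A) = A.
Proof. by apply: opP => i j; rewrite !adjE conjCK. Qed.

Lemma adj_mulop A B : adj (mulop A B) = mulop (adj B) (adj A).
Proof.
apply: opP => i j; rewrite adjE !mulopE rmorph_sum; apply: eq_bigr => z _.
by rewrite rmorphM !adjE mulrC.
Qed.

Lemma mulopZl c A B : mulop (scop c A) B = scop c (mulop A B).
Proof.
apply: opP => i j; rewrite scopE !mulopE mulr_sumr; apply: eq_bigr => z _.
by rewrite scopE mulrA.
Qed.

Lemma mulopZr c A B : mulop A (scop c B) = scop c (mulop A B).
Proof.
apply: opP => i j; rewrite scopE !mulopE mulr_sumr; apply: eq_bigr => z _.
by rewrite scopE mulrCA.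
Qed.

Lemma scopA c1 c2 A : scop c1 (scop c2 A) = scop (c1 * c2) A.
Proof. by apply: opP => i j; rewrite !scopE mulrA. Qed.

Lemma scop1 A : scop 1 A = A.
Proof. by apply: opP => i j; rewrite !scopE mul1r. Qed.

Lemma scopKV c A : c != 0 -> scop c^-1 (scop c A) = A.
Proof. by move=> c_neq0; rewrite scopA mulVf ?scop1. Qed.

Lemma adjZ c A : adj (scop c A) = scop c^* (adj A).
Proof. by apply: opP => i j; rewrite !adjE !scopE rmorphM adjE. Qed.

Lemma trop_mulC A B : trop (mulop A B) = trop (mulop B A).
Proof.
rewrite /trop; under eq_bigr do rewrite mulopE.
rewrite exchange_big; apply: eq_bigr => z _; rewrite mulopE.
by apply: eq_bigr => x _; rewrite mulrC.
Qed.

Lemma hsE A B : hs A B = \sum_x \sum_z (A (z, x))^* * B (z, x).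
Proof.
rewrite /hs /trop; apply: eq_bigr => x _; rewrite mulopE.
by apply: eq_bigr => z _; rewrite adjE.
Qed.

Lemma hsZr c A B : hs A (scop c B) = c * hs A B.
Proof. by rewrite /hs mulopZr /trop mulr_sumr; apply: eq_bigr => x _; rewrite scopE. Qed.

Lemma hsZl c A B : hs (scop c A) B = c^* * hs A B.
Proof. by rewrite /hs adjZ mulopZl /trop mulr_sumr; apply: eq_bigr => x _; rewrite scopE. Qed.

Lemma hs_sum (J : finType) A (P : pred J) (B : J -> Op I) :
  hs A (\sum_(j | P j) B j) = \sum_(j | P j) hs A (B j).
Proof.
apply: (big_morph (hs A)) => [X Y|].
  rewrite !hsE -big_split /=; apply: eq_bigr => x _.
  by rewrite -big_split /=; apply: eq_bigr => z _; rewrite ffunE mulrDr.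
by rewrite hsE big1 // => x _; rewrite big1 // => z _; rewrite ffunE mulr0.
Qed.

Definition mx_of_op A : 'M[algC]_#|I| := \matrix_(i, j) A (enum_val i, enum_val j).

Lemma mx_of_op_mul A B : mx_of_op (mulop A B) = mx_of_op A *m mx_of_op B.
Proof.
apply/matrixP => i j; rewrite !mxE mulopE.
rewrite (reindex (@enum_val I (pred_of_simpl predT))) /=; last first.
  by exists enum_rank => x _; [rewrite enum_valK | rewrite enum_rankK].
by apply: eq_bigr => k _; rewrite !mxE.
Qed.

Lemma mx_of_op_id : mx_of_op (idop I) = 1%:M.
Proof. by apply/matrixP => i j; rewrite !mxE idopE (inj_eq enum_val_inj). Qed.

Lemma mx_of_op_inj : injective mx_of_op.
Proof.
move=> A B /matrixP eqAB; apply: opP => i j.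
by move: (eqAB (enum_rank i) (enum_rank j)); rewrite !mxE !enum_rankK.
Qed.

(* Through matrices: a one-sided inverse of a square matrix is two-sided. *)
Lemma unitary_adjl V : unitary V -> mulop (adj V) V = idop I.
Proof.
move=> VVadj; apply: mx_of_op_inj; rewrite mx_of_op_mul mx_of_op_id.
by apply: mulmx1C; rewrite -mx_of_op_mul VVadj mx_of_op_id.
Qed.

Lemma unitary_mul V W : unitary V -> unitary W -> unitary (mulop V W).
Proof.
rewrite /unitary adj_mulop => uV uW.
by rewrite mulopA -(mulopA W) uW mul1op uV.
Qed.

Lemma unitary_adj V : unitary V -> unitary (adj V).
Proof. by rewrite /unitary adjK => /unitary_adjl. Qed.

Lemma omegaZ V c A : omega V (scop c A) = scop c (omega V A).
Proof. by rewrite /omega mulopZr mulopZl. Qed.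

Lemma omegadZ V c A : omegad V (scop c A) = scop c (omegad V A).
Proof. by rewrite /omegad mulopZr mulopZl. Qed.

Lemma omegaK V A : unitary V -> omegad V (omega V A) = A.
Proof.
by move=> /unitary_adjl uV; rewrite /omegad /omega !mulopA uV mulop1 -!mulopA uV mul1op.
Qed.

Lemma omegadK V A : unitary V -> omega V (omegad V A) = A.
Proof.
by move=> uV; rewrite /omegad /omega !mulopA uV mulop1 -!mulopA uV mul1op.
Qed.

Lemma omega_mul V W A : omega (mulop V W) A = omega V (omega W A).
Proof. by rewrite /omega adj_mulop !mulopA. Qed.

Lemma omegad_mul V W A : omegad (mulop V W) A = omegad W (omegad V A).
Proof. by rewrite /omegad adj_mulop !mulopA. Qed.

Lemma omega_adj V A : omega (adj V) A = omegad V A.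
Proof. by rewrite /omegad /omega adjK. Qed.

Lemma omegad_adj V A : omegad (adj V) A = omega V A.
Proof. by rewrite /omegad /omega adjK. Qed.

Lemma omegad_phase c V A : `|c| = 1 -> omegad (scop c V) A = omegad V A.
Proof.
move=> c1; rewrite /omegad adjZ !mulopZl !mulopZr scopA mulrC -normCK c1.
by rewrite expr1n scop1.
Qed.

Lemma hs_omega V B A : hs B (omega V A) = hs (omegad V B) A.
Proof.
rewrite /hs /omegad /omega !adj_mulop adjK.
by rewrite !mulopA [RHS]trop_mulC !mulopA.
Qed.

Lemma omegad_ketbra_omega V B A :
  omegad V (ketbra B B (omega V A)) = ketbra (omegad V B) (omegad V B) A.
Proof. by rewrite /ketbra omegadZ hs_omega. Qed.

Lemma ketbra_phase c B A : `|c| = 1 -> ketbra (scop c B) (scop c B) A = ketbra B B A.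
Proof. by move=> c1; rewrite /ketbra hsZl scopA mulrC mulrA -normCK c1 expr1n mul1r. Qed.

Lemma phase_eq_sym A B : phase_eq A B -> phase_eq B A.
Proof.
move=> [c [c1 ->]]; exists c^-1; split; first by rewrite normfV c1 invr1.
by rewrite scopKV // -normr_eq0 c1 oner_neq0.
Qed.

Lemma phase_eq_trans A B C : phase_eq A B -> phase_eq B C -> phase_eq A C.
Proof.
move=> [c [c1 ->]] [d [d1 ->]]; exists (c * d); split; last by rewrite scopA.
by rewrite normrM c1 d1 mulr1.
Qed.

End Operators.

Lemma pauli1_conj b i j : (pauli1 b (i, j))^* = pauli1 b (j, i).
Proof.
have conjNi : (- 'i : algC)^* = 'i by rewrite -conjCi conjCK.
by case: b => [[] []]; case: i; case: j;
  rewrite /= /idop /Xm /Ym /Zm !ffunE /= ?conjC0 ?conjC1 ?conjCi ?conjNi ?rmorphN1.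
Qed.

Lemma hs_pauli1 b b' : hs (pauli1 b) (pauli1 b') = (b == b')%:R * 2.
Proof.
rewrite /hs /trop !big_bool /= !mulopE !big_bool /= !adjE !pauli1_conj.
case: b => [[] []]; case: b' => [[] []]; rewrite /= /idop /Xm /Ym /Zm !ffunE /=;
rewrite ?mulr0 ?mul0r ?mulr1 ?mul1r ?mulrN ?mulNr ?opprK ?add0r ?addr0 -?expr2 ?sqrCi ?opprK;
by rewrite ?mulr0 ?mul0r ?mulr1 ?mul1r ?mulrN ?mulNr ?opprK ?add0r ?addr0 ?subrr ?addrN
  ?addNr ?expr1n.
Qed.

Lemma pauli1_phase_inj b b' c : pauli1 b = scop c (pauli1 b') -> b = b'.
Proof.
have two_neq0 : (2 : algC) != 0 by rewrite pnatr_eq0.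
case: (eqVneq b b') => // neq_bb' eq_b.
have := congr1 (hs (pauli1 b')) eq_b.
rewrite hsZr !hs_pauli1 eq_sym (negPf neq_bb') eqxx mul0r mul1r => /esym/eqP.
rewrite mulf_eq0 (negPf two_neq0) orbF => /eqP c0.
have := congr1 (hs (pauli1 b)) eq_b.
by rewrite hsZr c0 mul0r hs_pauli1 eqxx mul1r => /eqP; rewrite (negPf two_neq0).
Qed.

Lemma ketbra_pauli1_inj b b' :
  (forall A, ketbra (pauli1 b) (pauli1 b) A = ketbra (pauli1 b') (pauli1 b') A) -> b = b'.
Proof.
move=> eq_ketbra; case: (eqVneq b b') => // neq_bb'.
have := congr1 (hs (pauli1 b')) (eq_ketbra (pauli1 b')).
rewrite /ketbra !hsZr !hs_pauli1 (negPf neq_bb') eqxx /= mul0r mul1r mul0r.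
by move/eqP; rewrite eq_sym mulf_eq0 pnatr_eq0.
Qed.

Lemma omega_idop (V : Mat2) : unitary V -> omega V (idop bool) = idop bool.
Proof. by move=> uV; rewrite /omega mulop1. Qed.

Lemma clifford1_mul (V W : Mat2) : clifford1 V -> clifford1 W -> clifford1 (mulop V W).
Proof.
move=> cV cW b; case: (cW b) => b1 [k1 eW]; case: (cV b1) => b2 [k2 eV].
by exists b2, (k1 + k2)%N; rewrite omega_mul eW omegaZ eV scopA -exprD.
Qed.

Lemma scop_iX_inv k (X Y : Mat2) : X = scop ('i ^+ k) Y -> Y = scop ('i ^+ (3 * k)) X.
Proof.
move=> ->; rewrite scopA -exprD -mulSnr exprM -[4%N]/(2 * 2)%N exprM sqrCi.
by rewrite sqrrN !expr1n scop1.
Qed.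

(* Conjugation by V permutes the Paulis up to phases; the inverse permutation
   describes conjugation by V^dagger. *)
Lemma clifford1_adj (V : Mat2) : unitary V -> clifford1 V -> clifford1 (adj V).
Proof.
move=> uV cV; have [pi Hpi] := choice cV.
have pi_inj : injective pi.
  move=> b1 b2 eq_pi; case: (Hpi b1) => k1 e1; case: (Hpi b2) => k2 e2.
  have {}e1 : pauli1 b1 = scop ('i ^+ k1) (omegad V (pauli1 (pi b1))).
    by rewrite -omegadZ -e1 omegaK.
  have {}e2 : pauli1 b2 = scop ('i ^+ k2) (omegad V (pauli1 (pi b2))).
    by rewrite -omegadZ -e2 omegaK.
  apply: (@pauli1_phase_inj _ _ ('i ^+ k1 * 'i ^+ (3 * k2))).
  by rewrite e1 eq_pi (scop_iX_inv e2) scopA.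
have [pinv _ pinvK] := injF_bij pi_inj.
move=> b; exists (pinv b); case: (Hpi (pinv b)) => k; rewrite pinvK => ek.
exists (3 * k)%N; rewrite omega_adj; apply: scop_iX_inv.
by rewrite -omegadZ -ek omegaK.
Qed.

Lemma clifford1_omegad_Z (V : Mat2) : unitary V -> clifford1 V ->
  exists b c, [/\ b != (false, false), `|c| = 1 & omegad V Zm = scop c (pauli1 b)].
Proof.
move=> uV cV; case: (clifford1_adj uV cV (true, false)) => b [k ek].
rewrite omega_adj /= in ek.
exists b, ('i ^+ k); split=> //; last by rewrite normrX normCi expr1n.
apply/eqP => b0; rewrite b0 /= in ek.
have : Zm = scop ('i ^+ k) (idop bool) by rewrite -(omega_idop uV) -omegaZ -ek omegadK.
by move/(@pauli1_phase_inj (true, false) (false, false)).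
Qed.

Lemma polarization (x0 x1 y0 y1 : algC) :
  x0 * y0 + x1 * y1 = 2^-1 * ((x0 + x1) * (y0 + y1) + (x0 - x1) * (y0 - y1)).
Proof. by field. Qed.

(* With P_x := V^dagger |x><x| V one has P_0 + P_1 = 1 and P_0 - P_1 = c sigma_b;
   the left-hand side is sum_x conj (P_x (u, v)) * P_x (p, q), so polarize. *)
Lemma unitary_fourth_moment (V : Mat2) b c : unitary V -> `|c| = 1 ->
  omegad V Zm = scop c (pauli1 b) ->
  forall u v p q,
  \sum_x V (x, u) * (V (x, v))^* * (V (x, p))^* * V (x, q)
    = 2^-1 * ((u == v)%:R * (p == q)%:R + (pauli1 b (u, v))^* * pauli1 b (p, q)).
Proof.
move=> uV c1 eZ u v p q.
have sumP i j : (V (false, i))^* * V (false, j) + (V (true, i))^* * V (true, j)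
                = (i == j)%:R.
  have := congr1 (fun M : Mat2 => M (i, j)) (unitary_adjl uV).
  by rewrite mulopE big_bool /= !adjE idopE addrC.
have diffP i j : (V (false, i))^* * V (false, j) - (V (true, i))^* * V (true, j)
                 = c * pauli1 b (i, j).
  have := congr1 (fun M : Mat2 => M (i, j)) eZ.
  rewrite scopE /omegad mulopE big_bool /= !mulopE !big_bool /= !adjE /Zm !ffunE /=.
  by rewrite !mulr0 !addr0 !add0r mulrN1 mulr1 mulNr addrC.
pose P k i j := (V (k, i))^* * V (k, j).
have sumPc : (P false u v)^* + (P true u v)^* = (u == v)%:R.
  by rewrite -conjC_nat -(sumP u v) rmorphD.
have diffPc : (P false u v)^* - (P true u v)^* = c^* * (pauli1 b (u, v))^*.
  by transitivity ((c * pauli1 b (u, v))^*); [rewrite -(diffP u v) rmorphB | exact: rmorphM].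
transitivity ((P false u v)^* * P false p q + (P true u v)^* * P true p q).
  by rewrite big_bool /= /P !rmorphM /= !conjCK; ring.
rewrite polarization sumPc diffPc sumP diffP mulrACA.
by rewrite [c^* * c]mulrC -normCK c1 expr1n mul1r.
Qed.

Lemma hs_Eop n (x : bits n) (W : OpN n) : hs (Eop x) W = W (x, x).
Proof.
rewrite /hs /trop (bigD1 x) //= big1 ?addr0 => [|y neq_yx]; last first.
  by rewrite mulopE big1 // => z _; rewrite adjE ffunE /= (negPf neq_yx) andbF conjC0 mul0r.
rewrite mulopE (bigD1 x) //= big1 ?addr0 => [|z neq_zx].
  by rewrite adjE ffunE /= eqxx conjC1 mul1r.
by rewrite adjE ffunE /= (negPf neq_zx) conjC0 mul0r.
Qed.

Lemma Mop_entry n (Y : OpN n) w z : Mop Y (w, z) = (w == z)%:R * Y (w, w).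
Proof.
rewrite /Mop sum_ffunE (bigD1 w) //= big1 ?addr0 => [|x neq_xw].
  by rewrite /ketbra scopE hs_Eop ffunE /= eqxx /= mulrC eq_sym.
by rewrite /ketbra scopE ffunE /= eq_sym (negPf neq_xw) mulr0.
Qed.

Lemma omegad_Mop_omega_entry n (g X : OpN n) p1 p2 :
  omegad g (Mop (omega g X)) (p1, p2) =
  \sum_y \sum_z X (y, z) * \sum_w g (w, y) * (g (w, z))^* * (g (w, p1))^* * g (w, p2).
Proof.
have omegad_Mop Y : omegad g (Mop Y) (p1, p2) = \sum_w (g (w, p1))^* * Y (w, w) * g (w, p2).
  rewrite /omegad mulopE; apply: eq_bigr => z _; rewrite mulopE (bigD1 z) //= big1 => [|w neq_wz].
    by rewrite adjE Mop_entry eqxx mul1r addr0.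
  by rewrite Mop_entry (negPf neq_wz) mul0r mulr0.
rewrite omegad_Mop.
transitivity (\sum_w \sum_z \sum_y X (y, z) *
                (g (w, y) * (g (w, z))^* * (g (w, p1))^* * g (w, p2))).
  apply: eq_bigr => w _; rewrite /omega mulopE mulr_sumr mulr_suml.
  apply: eq_bigr => z _; rewrite mulopE !mulr_suml mulr_sumr mulr_suml.
  by apply: eq_bigr => y _; rewrite adjE; ring.
rewrite exchange_big /=; under eq_bigr do rewrite exchange_big /=.
rewrite exchange_big /=; apply: eq_bigr => y _; apply: eq_bigr => z _.
by rewrite mulr_sumr.
Qed.

Lemma ketbra_hsigma_entry n (a : pauliv n) X p1 p2 :
  ketbra (hsigma a) (hsigma a) X (p1, p2) =
  \sum_y \sum_z X (y, z) * ((Defs.dim n)^-1 * (sigma a (y, z))^* * sigma a (p1, p2)).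
Proof.
have conj_norm : ((sqrtC (Defs.dim n))^-1)^* * (sqrtC (Defs.dim n))^-1 = (Defs.dim n)^-1.
  rewrite geC0_conj; last by rewrite invr_ge0 sqrtC_ge0 ler0n.
  by rewrite -invfM -expr2 sqrtCK.
rewrite /ketbra /hsigma scopE hsZl hsE !scopE mulr_sumr mulr_suml exchange_big /=.
apply: eq_bigr => y _; rewrite mulr_sumr mulr_suml; apply: eq_bigr => z _.
by rewrite -conj_norm; ring.
Qed.

Lemma tens_super_avg n (T : finType) (G : 'I_n -> {set T})
    (L : 'I_n -> T -> Mat2 -> Mat2) (C : OpN n) :
  scop (\prod_(i < n) (#|G i|%:R : algC))^-1
    (\sum_(t : {ffun 'I_n -> T} | [forall i, t i \in G i]) tens_super (fun i => L i (t i)) C)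
  = tens_super (fun i => avg_super (G i) (L i)) C.
Proof.
apply/ffunP => -[p1 p2]; rewrite scopE sum_ffunE.
under [X in _ * X]eq_bigr do rewrite ffunE.
rewrite ffunE /= exchange_big /= big_distrr /=; apply: eq_bigr => q _.
rewrite -big_distrr /= mulrCA; congr (_ * _).
under [RHS]eq_bigr do rewrite /avg_super scopE sum_ffunE.
by rewrite big_split /= prodfV bigA_distr_big_dep.
Qed.

Section Transversal.
Variables (T : finType) (U : T -> Mat2).
Hypothesis HT : clifford_transversal U.
Variable ga : bool * bool -> T.
Hypothesis Hga : forall a, a != (false, false) ->
  forall A, omegad (U (ga a)) (ketbra Zm Zm (omega (U (ga a)) A))
            = ketbra (pauli1 a) (pauli1 a) A.

Definition Z_pullback t b :=
  exists c : algC, `|c| = 1 /\ omegad (U t) Zm = scop c (pauli1 b).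

Lemma U_unitary t : unitary (U t).
Proof. by case: HT => HU _ _; case: (HU t). Qed.

Lemma U_clifford t : clifford1 (U t).
Proof. by case: HT => HU _ _; case: (HU t). Qed.

Lemma U_phase_inj t t' (V : Mat2) : phase_eq V (U t) -> phase_eq V (U t') -> t = t'.
Proof.
move=> eVt eVt'; case: HT => _ _ Uinj; apply: Uinj.
exact: phase_eq_trans (phase_eq_sym eVt) eVt'.
Qed.

Lemma U_phase_surj (V : Mat2) : unitary V -> clifford1 V -> exists t, phase_eq V (U t).
Proof. by case: HT => _ HU _; apply: HU. Qed.

Lemma Z_pullback_exists t : exists2 b, b != (false, false) & Z_pullback t b.
Proof.
have [b [c [b_neq0 c1 eZ]]] := clifford1_omegad_Z (U_unitary t) (U_clifford t).
by exists b => //; exists c.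
Qed.

Lemma Z_pullback_uniq t b b' : Z_pullback t b -> Z_pullback t b' -> b = b'.
Proof.
move=> [c [c1 eZ]] [c' [c'1 eZ']].
apply: (@pauli1_phase_inj _ _ (c^-1 * c')).
by rewrite -scopA -eZ' eZ scopKV // -normr_eq0 c1 oner_neq0.
Qed.

Lemma Z_pullback_ketbra t b : Z_pullback t b -> forall A,
  omegad (U t) (ketbra Zm Zm (omega (U t) A)) = ketbra (pauli1 b) (pauli1 b) A.
Proof. by move=> [c [c1 eZ]] A; rewrite omegad_ketbra_omega eZ ketbra_phase. Qed.

Lemma ketbra_Z_pullback t b : (forall A,
  omegad (U t) (ketbra Zm Zm (omega (U t) A)) = ketbra (pauli1 b) (pauli1 b) A) ->
  Z_pullback t b.
Proof.
move=> eb; have [b' _ tb'] := Z_pullback_exists t.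
suff -> : b = b' by [].
by apply: ketbra_pauli1_inj => A; rewrite -eb (Z_pullback_ketbra tb').
Qed.

Lemma StZ_Z_pullback h : (h \in StZ U) <-> Z_pullback h (true, false).
Proof.
rewrite /StZ in_set; split=> [/asboolP eZ | hZ].
  by apply: ketbra_Z_pullback => A; rewrite eZ.
by apply/asboolP => A; rewrite (Z_pullback_ketbra hZ).
Qed.

Lemma ga_Z_pullback a : a != (false, false) -> Z_pullback (ga a) a.
Proof. by move=> a_neq0; apply: ketbra_Z_pullback; apply: Hga. Qed.

Lemma Gset_Z_pullback a t : a != (false, false) -> (t \in Gset U ga a) <-> Z_pullback t a.
Proof.
move=> a_neq0; have [c2 [c21 eZa]] := ga_Z_pullback a_neq0.
have c2_neq0 : c2 != 0 by rewrite -normr_eq0 c21 oner_neq0.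
rewrite /Gset (negPf a_neq0) in_set; split.
  move/asboolP => [h /StZ_Z_pullback [c1 [c11 eZh]] [c [c1' eUt]]].
  rewrite /Z_pullback eUt.
  exists (c1 * c2); split; first by rewrite normrM c11 c21 mulr1.
  by rewrite omegad_phase // omegad_mul eZh /= omegadZ eZa scopA.
move=> [c [c1 eZt]].
(* The representative h' of U t g_a^dagger pulls Z back to itself, so h' is in St(Z). *)
pose h := mulop (U t) (adj (U (ga a))).
have [h' [c' [c'1 eh]]] : exists h', phase_eq h (U h').
  apply: U_phase_surj.
    by apply: unitary_mul; [exact: U_unitary | exact/unitary_adj/U_unitary].
  by apply: clifford1_mul; [exact: U_clifford | exact: clifford1_adj (U_unitary _) (U_clifford _)].
have c'_neq0 : c' != 0 by rewrite -normr_eq0 c'1 oner_neq0.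
apply/asboolP; exists h'.
  apply/StZ_Z_pullback; exists (c * c2^-1); split.
    by rewrite normrM normfV c1 c21 invr1 mulr1.
  have -> : U h' = scop c'^-1 h by rewrite eh scopKV.
  rewrite omegad_phase ?normfV ?c'1 ?invr1 // omegad_mul eZt omegadZ omegad_adj.
  rewrite -[pauli1 a](scopKV _ c2_neq0) -eZa omegaZ omegadK ?scopA //.
  exact: U_unitary.
exists c'; split=> //.
by rewrite -mulopZl -eh /h mulopA (unitary_adjl (U_unitary _)) mulop1.
Qed.

(* The representative of h g_a; the fallback [h] is never reached, see [shiftP]. *)
Definition shift a h : T :=
  odflt h [pick t | `[< phase_eq (mulop (U h) (U (ga a))) (U t) >]].

Lemma shiftP a h : phase_eq (mulop (U h) (U (ga a))) (U (shift a h)).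
Proof.
rewrite /shift; case: pickP => [t /asboolP //| none].
have [t et] : exists t, phase_eq (mulop (U h) (U (ga a))) (U t).
  by apply: U_phase_surj; [apply: unitary_mul | apply: clifford1_mul];
    (exact: U_unitary || exact: U_clifford).
by move: (none t) => /asboolP.
Qed.

Lemma shift_inj a : injective (shift a).
Proof.
move=> h1 h2 e; have := shiftP a h1; rewrite e => /phase_eq_trans.
move=> /(_ _ (phase_eq_sym (shiftP a h2))) [c [c1 E]].
have := congr1 (fun M => mulop M (adj (U (ga a)))) E.
rewrite /= mulopZl !mulopA (U_unitary (ga a)) !mulop1 => E'.
by case: HT => _ _ Uinj; apply: Uinj; exists c.
Qed.

Lemma Gset_shift a : a != (false, false) -> Gset U ga a = shift a @: StZ U.
Proof.
move=> a_neq0; apply/setP => t; rewrite /Gset (negPf a_neq0) in_set.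
apply/asboolP/imsetP => [[h hS et] | [h hS ->]]; last first.
  by exists h => //; apply: phase_eq_sym; exact: shiftP.
by exists h => //; exact: U_phase_inj (phase_eq_sym et) (shiftP a h).
Qed.

Lemma card_Gset a : a != (false, false) -> #|Gset U ga a| = #|StZ U|.
Proof. by move=> a_neq0; rewrite Gset_shift // card_imset //; exact: shift_inj. Qed.

Lemma Gset_mem_uniq t b b' : b != (false, false) -> b' != (false, false) ->
  t \in Gset U ga b -> t \in Gset U ga b' -> b = b'.
Proof.
move=> b_neq0 b'_neq0 /(Gset_Z_pullback _ b_neq0) tb /(Gset_Z_pullback _ b'_neq0).
exact: Z_pullback_uniq.
Qed.

Lemma card_transversal : #|T| = (3 * #|StZ U|)%N.
Proof.
have one_Gset t : (\sum_(b | b != (false, false)) (t \in Gset U ga b) = 1)%N.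
  have [b0 b0_neq0 Zb0] := Z_pullback_exists t.
  have tb0 : t \in Gset U ga b0 by exact/Gset_Z_pullback.
  rewrite (bigD1 b0) //= tb0 big1 // => b /andP [b_neq0 neq_bb0].
  case: (boolP (t \in _)) => // tb.
  by rewrite (Gset_mem_uniq b_neq0 b0_neq0 tb tb0) eqxx in neq_bb0.
rewrite -[#|T|]sum1_card (eq_bigr _ (fun t _ => esym (one_Gset t))) exchange_big /=.
rewrite (eq_bigr (fun _ => #|StZ U|)) => [|b b_neq0]; last first.
  rewrite -(card_Gset b_neq0) -sum1_card [RHS]big_mkcond.
  by apply: eq_bigr => i _; case: (i \in _).
by rewrite sum_nat_const cardC1 card_prod card_bool mulnC.
Qed.

Lemma card_Gset_mul3 a : a != (false, false) -> (3 * #|Gset U ga a|)%N = #|T|.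
Proof. by move=> a_neq0; rewrite card_Gset // card_transversal. Qed.

Lemma Gset_fourth_moment t u v p q :
  \sum_x U t (x, u) * (U t (x, v))^* * (U t (x, p))^* * U t (x, q)
  = \sum_(b | t \in Gset U ga b) 2^-1 * (pauli1 b (u, v))^* * pauli1 b (p, q).
Proof.
have [b0 b0_neq0 [c [c1 eZ]]] := Z_pullback_exists t.
rewrite (unitary_fourth_moment (U_unitary t) c1 eZ).
rewrite (eq_bigl (pred2 (false, false) b0)) => [|b]; last first.
  have tb0 : t \in Gset U ga b0 by apply/Gset_Z_pullback => //; exists c.
  rewrite /=; have [-> | b_neq0] := eqVneq b (false, false); first by rewrite /Gset eqxx inE.
  by apply/idP/eqP => [tb | ->] //; exact: Gset_mem_uniq b_neq0 b0_neq0 tb tb0.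
rewrite (bigD1 (false, false)) //= (big_pred1 b0) => [|b]; last first.
  by rewrite /=; case: (eqVneq b b0) => [->|]; rewrite ?orbT ?b0_neq0 ?orbF ?andbN.
by rewrite !idopE conjC_nat mulrDr !mulrA.
Qed.

Variable n : nat.

Definition local_clifford (t : {ffun 'I_n -> T}) : OpN n := tens (fun i => U (t i)).

Lemma local_clifford_fourth_moment (t : {ffun 'I_n -> T}) y z p1 p2 :
  let g := local_clifford t in
  \sum_w g (w, y) * (g (w, z))^* * (g (w, p1))^* * g (w, p2)
  = \sum_(a : pauliv n | [forall i, t i \in Gset U ga (a i)])
      (Defs.dim n)^-1 * (sigma a (y, z))^* * sigma a (p1, p2).
Proof.
transitivity (\prod_i \sum_(b | t i \in Gset U ga b)
                2^-1 * (pauli1 b (y i, z i))^* * pauli1 b (p1 i, p2 i)).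
  under [RHS]eq_bigr do rewrite -Gset_fourth_moment.
  rewrite bigA_distr_bigA /=; apply: eq_bigr => w _.
  by rewrite !ffunE /= !rmorph_prod -!big_split.
rewrite bigA_distr_big_dep /=; apply: eq_big => [a | a _]; first exact/familyP/forallP.
rewrite /sigma /tens !ffunE rmorph_prod !big_split /= prodr_const card_ord.
by rewrite /Defs.dim natrX exprVn.
Qed.


Lemma local_clifford_frame (t : {ffun 'I_n -> T}) (X : OpN n) :
  omegad (local_clifford t) (Mop (omega (local_clifford t) X))
  = \sum_(a : pauliv n | [forall i, t i \in Gset U ga (a i)]) ketbra (hsigma a) (hsigma a) X.
Proof.
apply/ffunP => -[p1 p2]; rewrite omegad_Mop_omega_entry sum_ffunE.
under [RHS]eq_bigr do rewrite ketbra_hsigma_entry.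
rewrite [RHS]exchange_big; apply: eq_bigr => y _.
rewrite [RHS]exchange_big; apply: eq_bigr => z _.
by rewrite -mulr_sumr local_clifford_fourth_moment.
Qed.

Lemma card_local_clifford (a : pauliv n) :
  (3 ^ supp a * \prod_(i < n) #|Gset U ga (a i)|)%N = (#|T| ^ n)%N.
Proof.
rewrite /supp -prod_nat_const (big_mkcond (fun i => i \in _)) /= -big_split /=.
rewrite -[in RHS](card_ord n) -prod_nat_const; apply: eq_bigr => i _.
rewrite in_set; have [a0 | a_neq0] /= := eqVneq (a i) (false, false).
  by rewrite a0 /Gset eqxx cardsT mul1n.
exact: card_Gset_mul3.
Qed.

Lemma noisy_frame_operator (Lam : {ffun 'I_n -> T} -> OpN n -> OpN n) C :
  scop (#|{ffun 'I_n -> T}|%:R)^-1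
    (\sum_(t : {ffun 'I_n -> T})
       omegad (local_clifford t) (Mop (omega (local_clifford t) (Lam t C))))
  = \sum_(a : pauliv n) scop (3%:R ^+ supp a)^-1 (ketbra (hsigma a) (hsigma a)
      (scop (\prod_(i < n) (#|Gset U ga (a i)|%:R : algC))^-1
        (\sum_(t : {ffun 'I_n -> T} | [forall i, t i \in Gset U ga (a i)]) Lam t C))).
Proof.
apply/ffunP => -[p1 p2]; rewrite scopE !sum_ffunE.
under eq_bigr do rewrite local_clifford_frame sum_ffunE big_mkcond /=.
rewrite mulr_sumr; under eq_bigr do rewrite mulr_sumr.
rewrite exchange_big /=; apply: eq_bigr => a _.
rewrite -mulr_sumr -big_mkcond /= /ketbra hsZr hs_sum !scopE.
under eq_bigr do rewrite scopE.
rewrite -mulr_suml !mulrA -invfM -natrX -natr_prod -natrM card_local_clifford.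
by rewrite card_ffun card_ord scopE mulrA.
Qed.

End Transversal.

Theorem proposition4 (n : nat) (T : finType) (U : T -> Mat2)
  (HT : clifford_transversal U)
  (ga : bool * bool -> T)
  (Hga : forall a, a != (false, false) ->
     forall A, omegad (U (ga a)) (ketbra Zm Zm (omega (U (ga a)) A))
               = ketbra (pauli1 a) (pauli1 a) A)
  (Lam : {ffun 'I_n -> T} -> OpN n -> OpN n) :
  let g := fun t : {ffun 'I_n -> T} => tens (fun i => U (t i)) in
  let Stilde := fun C : OpN n =>
      scop (#|{ffun 'I_n -> T}|%:R)^-1
        (\sum_(t : {ffun 'I_n -> T}) omegad (g t) (Mop (omega (g t) (Lam t C)))) in
  let Lbar := fun (a : pauliv n) (C : OpN n) =>
      scop (\prod_(i < n) (#|Gset U ga (a i)|%:R : algC))^-1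
        (\sum_(t : {ffun 'I_n -> T} | [forall i, t i \in Gset U ga (a i)]) Lam t C) in
  (forall C : OpN n,
     Stilde C = \sum_(a : pauliv n)
                  scop (3%:R ^+ supp a)^-1 (ketbra (hsigma a) (hsigma a) (Lbar a C)))
  /\
  (forall Lam1 : 'I_n -> T -> Mat2 -> Mat2,
     (forall t, Lam t = tens_super (fun i => Lam1 i (t i))) ->
     forall (a : pauliv n) (C : OpN n),
       Lbar a C = tens_super (fun i => avg_super (Gset U ga (a i)) (Lam1 i)) C).
Proof.
move=> g Stilde Lbar; split=> [C | Lam1 local_Lam a C].
  exact: (noisy_frame_operator HT Hga Lam C).
rewrite /Lbar (eq_bigr _ (fun t _ => congr1 (fun L => L C) (local_Lam t))).
exact: tens_super_avg.
Qed.
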